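(* Let $M=(S,\mathrm{Act},P)$ be an MDP, $T\subseteq S$, $\mathrm{rew}\colon S\to\mathbb{R}_{\ge0}$, $\mathrm{opt}\in\{\min,\max\}$, and let $x\in[0,\infty]^S$ be such that (1) $x\le E^{\mathrm{opt}}(x)$ (pointwise) and (2) for all $s\in S$, $\Pr^{\overline{\mathrm{opt}}}_s(\Diamond T)=1$ implies $x(s)<\infty$. Then $x(s)\le\mathbb{E}^{\mathrm{opt}}_s(\Diamond T)$ for all $s\in S$.
   Context: An MDP is a tuple $M=(S,\mathrm{Act},P)$ with $S$ finite, $\mathrm{Act}$ finite, $P\colon S\times\mathrm{Act}\times S\to[0,1]$ with $\sum_{s'}P(s,a,s')\in\{0,1\}$; $\mathrm{Act}(s)=\{a\mid\sum_{s'}P(s,a,s')=1\}$ is nonempty for all $s$; $\mathrm{Post}(s,a)=\{s'\mid P(s,a,s')>0\}$. A strategy is $\sigma\colon S\to\mathrm{Act}$ with $\sigma(s)\in\mathrm{Act}(s)$, inducing a Markov chain with transitions $P(s,\sigma(s),\cdot)$; $\Pr^\sigma_s(\Diamond T)$ is the probability of visiting $T$ from $s$, $\Pr^{\mathrm{opt}}_s(\Diamond T)=\mathrm{opt}_\sigma\Pr^\sigma_s(\Diamond T)$, and $\overline{\min}=\max,\overline{\max}=\min$. For an infinite path $s_0s_1\ldots$, the accumulated reward is $\sum_{k=0}^{n-1}\mathrm{rew}(s_k)$ where $n=\min\{i\mid s_i\in T\}$ if $T$ is visited, and $\infty$ if $T$ is never visited. $\mathbb{E}^\sigma_s(\Diamond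 T)$ is its expectation in the Markov chain induced by $\sigma$ started at $s$, and $\mathbb{E}^{\mathrm{opt}}_s(\Diamond T)=\mathrm{opt}_\sigma\mathbb{E}^\sigma_s(\Diamond T)$. The reward Bellman operator $E^{\mathrm{opt}}\colon[0,\infty]^S\to[0,\infty]^S$ is $E^{\mathrm{opt}}(x)(s)=0$ for $s\in T$ and $\mathrm{rew}(s)+\mathrm{opt}_{a\in\mathrm{Act}(s)}\sum_{s'\in\mathrm{Post}(s,a)}P(s,a,s')x(s')$ for $s\notin T$, with $p\cdot\infty=\infty$ for $p>0$ and $a+\infty=\infty$. *)

From HB Require Import structures.
From mathcomp Require Import all_boot all_order all_algebra.
From mathcomp Require Import all_classical all_reals all_analysis.
Set Implicit Arguments. Unset Strict Implicit. Unset Printing Implicit Defensive.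
Import Order.TTheory GRing.Theory Num.Theory.
Local Open Scope ring_scope.
Local Open Scope classical_set_scope.

Inductive optT := OMin | OMax.
Definition dual_opt (o : optT) := if o is OMin then OMax else OMin.

Definition opt_set (R : realType) (o : optT) (X : set (\bar R)) : \bar R :=
  if o is OMin then ereal_inf X else ereal_sup X.

Section MDP.
Variables (R : realType) (S A : finType) (P : S -> A -> S -> R).

Definition Act (s : S) : {set A} := [set a | \sum_(s' : S) P s a s' == 1].

Definition is_MDP : Prop :=
  (forall s a s', 0 <= P s a s' <= 1) /\
  (forall s a, \sum_(s' : S) P s a s' = 0 \/ \sum_(s' : S) P s a s' = 1) /\
  (forall s, exists a, a \in Act s).

Definition strategy (sigma : S -> A) : Prop := forall s, sigma s \in Act s.

Variable (T : {set S}).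

Definition first_hit (s : S) (n : nat) (pi : {ffun 'I_n.+1 -> S}) : bool :=
  [&& pi ord0 == s,
      pi ord_max \in T &
      [forall i : 'I_n.+1, (i < n)%N ==> (pi i \notin T)]].

Definition path_prob (sigma : S -> A) (n : nat) (pi : {ffun 'I_n.+1 -> S}) : R :=
  \prod_(i < n) P (pi (widen_ord (leqnSn n) i)) (sigma (pi (widen_ord (leqnSn n) i)))
                  (pi (lift ord0 i)).

Definition hit_prob (sigma : S -> A) (s : S) (n : nat) : R :=
  \sum_(pi : {ffun 'I_n.+1 -> S} | first_hit s pi) path_prob sigma pi.

Definition PrReach (sigma : S -> A) (s : S) : \bar R :=
  (\sum_(0 <= n <oo) (hit_prob sigma s n)%:E)%E.

Definition PrOpt (o : optT) (s : S) : \bar R :=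
  opt_set o [set PrReach sigma s | sigma in strategy].

Variable (rew : S -> R).

Definition path_rew (n : nat) (pi : {ffun 'I_n.+1 -> S}) : R :=
  \sum_(i < n) rew (pi (widen_ord (leqnSn n) i)).

(* E^sigma_s(<> T): expectation of the accumulated reward, which is +oo on the
   event of never visiting T (contributing +oo iff that event has positive
   probability, with 0 * oo = 0) *)
Definition ExpRew (sigma : S -> A) (s : S) : \bar R :=
  (\sum_(0 <= n <oo)
      (\sum_(pi : {ffun 'I_n.+1 -> S} | first_hit s pi) path_prob sigma pi * path_rew pi)%:E
   + (if PrReach sigma s == 1 then 0 else +oo))%E.

Definition ExpOpt (o : optT) (s : S) : \bar R :=
  opt_set o [set ExpRew sigma s | sigma in strategy].

Definition Bellman (o : optT) (x : S -> \bar R) (s : S) : \bar R :=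
  if s \in T then 0%E else
  ((rew s)%:E + opt_set o [set (\sum_(s' | (0 < P s a s')%R) (P s a s')%:E * x s')%E
                            | a in [set a | a \in Act s]])%E.

End MDP.

From mathcomp Require Import all_boot all_order all_algebra.
From mathcomp Require Import all_classical all_reals all_analysis.
From mathcomp Require Import ring lra.
Import Order.TTheory GRing.Theory Num.Theory.
Local Open Scope ring_scope.
Set Implicit Arguments. Unset Strict Implicit. Unset Printing Implicit Defensive.

(* Fix a strategy sg and a set G of states, closed under sg-successors outside
   T, from which sg reaches T almost surely, on which x is finite and satisfies
   x <= rew + P_sg x outside T.  Unfolding this inequality n times bounds x by
   the expected reward of the paths hitting T within n steps, plus
   (max x + n max rew) times the probability of missing T during n steps.  In a
   finite chain that probability decays geometrically on G, so x <= E^sg on G.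
   For opt = min, every sg either misses T with positive probability, and then
   E^sg = oo, or it qualifies with G the states from which it reaches T almost
   surely; there Pr^max = 1, so x is finite.  For opt = max, either some
   strategy misses T with positive probability from s, and then E^max = oo, or a
   Bellman-greedy strategy qualifies with G the states from which every strategy
   reaches T almost surely; there Pr^min = 1, and G is closed because switching
   a strategy at a single state preserves almost-sure reachability. *)

Lemma nneseries_le_ub (R : realType) (u : nat -> R) (M : \bar R) :
  (forall n, 0 <= u n) -> (forall n, (\sum_(0 <= i < n) (u i)%:E <= M)%E) ->
  (\sum_(0 <= i <oo) (u i)%:E <= M)%E.
Proof.
move=> u_ge0 ub; apply: lime_le; last exact: nearW.
by apply: is_cvg_nneseries => n _ _; rewrite lee_fin.
Qed.

Lemma psum_le_nneseries (R : realType) (u : nat -> R) n : (forall n, 0 <= u n) ->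
  ((\sum_(0 <= i < n) u i)%:E <= \sum_(0 <= i <oo) (u i)%:E)%E.
Proof.
by move=> u_ge0; rewrite -sumEFin; apply: nneseries_lim_ge => k _ _; rewrite lee_fin.
Qed.

Lemma sqr_succn_le_exp4 k : (k.+1 ^ 2 <= 4 ^ k)%N.
Proof. by rewrite (_ : 4 = 2 ^ 2)%N // -expnM mulnC expnM leq_exp2r // ltn_expl. Qed.

Lemma succn_mul_quarter_exp_le (R : numFieldType) k :
  k.+1%:R * 4^-1 ^+ k <= k.+1%:R^-1 :> R.
Proof.
have k1_gt0 : 0 < k.+1%:R :> R by rewrite ltr0n.
have e4_gt0 : 0 < 4 ^+ k :> R by rewrite exprn_gt0.
rewrite exprVn ler_pdivrMr // ler_pdivlMl // -expr2 -!natrX ler_nat.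
exact: sqr_succn_le_exp4.
Qed.

Lemma exists_succn_mul_quarter_exp_le (R : archiFieldType) (D e : R) : 0 <= D -> 0 < e ->
  exists k : nat, D * k.+1%:R * 4^-1 ^+ k <= e.
Proof.
move=> D_ge0 e_gt0; have := archi_boundP (divr_ge0 D_ge0 (ltW e_gt0)).
set k := Num.Def.archi_bound _ => De_lt_k; exists k.
apply: le_trans (_ : D * k.+1%:R^-1 <= e).
  by rewrite -mulrA ler_wpM2l // succn_mul_quarter_exp_le.
rewrite ler_pdivrMr ?ltr0n // -ler_pdivrMl // mulrC.
by apply/ltW/(lt_le_trans De_lt_k); rewrite ler_nat.
Qed.

Section first_hit_decomposition.
Variables (R : realType) (S A : finType) (P : S -> A -> S -> R) (T : {set S}).
Variable rew : S -> R.

Definition path_cons n (s0 : S) (p : {ffun 'I_n.+1 -> S}) : {ffun 'I_n.+2 -> S} :=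
  [ffun i => if unlift ord0 i is Some j then p j else s0].

Definition path_behead n (pi : {ffun 'I_n.+2 -> S}) : {ffun 'I_n.+1 -> S} :=
  [ffun j => pi (lift ord0 j)].

Lemma path_cons0 n s0 (p : {ffun 'I_n.+1 -> S}) : path_cons s0 p ord0 = s0.
Proof. by rewrite ffunE unlift_none. Qed.

Lemma path_cons_lift n s0 (p : {ffun 'I_n.+1 -> S}) j : path_cons s0 p (lift ord0 j) = p j.
Proof. by rewrite ffunE liftK. Qed.

Lemma path_consK n s0 : cancel (@path_cons n s0) (@path_behead n).
Proof. by move=> p; apply/ffunP => j; rewrite ffunE path_cons_lift. Qed.

Lemma path_cons_behead n (pi : {ffun 'I_n.+2 -> S}) :
  path_cons (pi ord0) (path_behead pi) = pi.
Proof.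
apply/ffunP => i; case: (unliftP ord0 i) => [j ->|->].
  by rewrite path_cons_lift ffunE.
by rewrite path_cons0.
Qed.

Lemma path_cons_widen n s0 (p : {ffun 'I_n.+1 -> S}) (i : 'I_n) :
  path_cons s0 p (widen_ord (leqnSn n.+1) (lift ord0 i)) = p (widen_ord (leqnSn n) i).
Proof.
have -> : widen_ord (leqnSn n.+1) (lift ord0 i) = lift ord0 (widen_ord (leqnSn n) i).
  exact: val_inj.
exact: path_cons_lift.
Qed.

Lemma path_cons_widen0 n s0 (p : {ffun 'I_n.+1 -> S}) :
  path_cons s0 p (widen_ord (leqnSn n.+1) ord0) = s0.
Proof. by rewrite (_ : widen_ord _ _ = ord0) ?path_cons0 //; exact: val_inj. Qed.

Lemma first_hit_head n s (p : {ffun 'I_n.+1 -> S}) : first_hit T s p -> p ord0 = s.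
Proof. by case/and3P => /eqP. Qed.

Lemma first_hit_cons n s0 (p : {ffun 'I_n.+1 -> S}) s :
  first_hit T s (path_cons s0 p) = [&& s0 == s, s0 \notin T & first_hit T (p ord0) p].
Proof.
rewrite /first_hit path_cons0 eqxx /=.
have -> : (ord_max : 'I_n.+2) = lift ord0 ord_max by apply/val_inj.
rewrite path_cons_lift.
have -> : [forall i : 'I_n.+2, (i < n.+1)%N ==> (path_cons s0 p i \notin T)] =
    (s0 \notin T) && [forall j : 'I_n.+1, (j < n)%N ==> (p j \notin T)].
  apply/forallP/andP => [avoid | [s0T /forallP avoid] i].
    split; first by have := avoid ord0; rewrite path_cons0.
    by apply/forallP => j; have := avoid (lift ord0 j); rewrite path_cons_lift.
  case: (unliftP ord0 i) => [j ->|->]; first by rewrite path_cons_lift; exact: avoid.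
  by rewrite path_cons0 s0T implybT.
by case: (s0 == s); case: (s0 \in T); case: (p ord_max \in T).
Qed.

Lemma big_first_hitS n s (F : {ffun 'I_n.+2 -> S} -> R) :
  \sum_(pi | first_hit T s pi) F pi =
  if s \in T then 0 else
    \sum_(s' : S) \sum_(p : {ffun 'I_n.+1 -> S} | first_hit T s' p) F (path_cons s p).
Proof.
rewrite (reindex (fun q : S * {ffun 'I_n.+1 -> S} => path_cons q.1 q.2)) /=; last first.
  exists (fun pi : {ffun 'I_n.+2 -> S} => (pi ord0, path_behead pi)) => [[s0 p] _ | pi _] /=.
    by rewrite path_cons0 path_consK.
  exact: path_cons_behead.
rewrite -(pair_big_dep xpredT (fun s0 p => first_hit T s (path_cons s0 p))
   (fun s0 p => F (path_cons s0 p))) /=.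
rewrite (bigD1 s) //= [X in _ + X]big1 ?addr0; last first.
  by move=> s0 /negbTE ns0; apply: big_pred0 => p; rewrite first_hit_cons ns0.
case: ifP => sT; first by apply: big_pred0 => p; rewrite first_hit_cons sT andbF.
under eq_bigl do rewrite first_hit_cons eqxx sT /=.
under [RHS]eq_bigr do rewrite big_mkcond.
rewrite exchange_big big_mkcond /=; apply: eq_bigr => p _.
rewrite (bigD1 (p ord0)) //= big1 ?addr0 // => s' ns'.
by case: ifP => // /andP[/eqP e _]; rewrite e eqxx in ns'.
Qed.

Lemma path_prob_cons sg n s0 (p : {ffun 'I_n.+1 -> S}) :
  path_prob P sg (path_cons s0 p) = P s0 (sg s0) (p ord0) * path_prob P sg p.
Proof.
rewrite /path_prob big_ord_recl path_cons_widen0 path_cons_lift.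
by congr (_ * _); apply: eq_bigr => i _; rewrite path_cons_widen path_cons_lift.
Qed.

Lemma path_rew_cons n s0 (p : {ffun 'I_n.+1 -> S}) :
  path_rew rew (path_cons s0 p) = rew s0 + path_rew rew p.
Proof.
rewrite /path_rew big_ord_recl path_cons_widen0.
by congr (_ + _); apply: eq_bigr => i _; rewrite path_cons_widen.
Qed.

Lemma hit_prob0 sg s : hit_prob P T sg s 0 = (s \in T)%:R.
Proof.
have first_hit0 (pi : {ffun 'I_1 -> S}) :
    first_hit T s pi = (s \in T) && (pi == [ffun => s]).
  rewrite /first_hit (_ : ord_max = ord0); last exact: val_inj.
  have -> : [forall i : 'I_1, (i < 0)%N ==> (pi i \notin T)] by apply/forallP.
  have -> : (pi == [ffun => s]) = (pi ord0 == s).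
    apply/eqP/eqP => [->|e]; first by rewrite ffunE.
    by apply/ffunP => i; rewrite ord1 ffunE.
  by case: eqP => [->|]; rewrite ?andbF // andbC.
rewrite /hit_prob; under eq_bigl do rewrite first_hit0.
case: (s \in T) => /=; last by rewrite big_pred0.
by rewrite (big_pred1 [ffun => s]) // /path_prob big_ord0.
Qed.

Lemma hit_probS sg s n : hit_prob P T sg s n.+1 =
  if s \in T then 0 else \sum_(s' : S) P s (sg s) s' * hit_prob P T sg s' n.
Proof.
rewrite /hit_prob big_first_hitS; case: ifP => // _; apply: eq_bigr => s' _.
by rewrite mulr_sumr; apply: eq_bigr => p fh; rewrite path_prob_cons (first_hit_head fh).
Qed.

Definition hit_rew sg s n :=
  \sum_(pi : {ffun 'I_n.+1 -> S} | first_hit T s pi) path_prob P sg pi * path_rew rew pi.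

Lemma hit_rew0 sg s : hit_rew sg s 0 = 0.
Proof. by apply: big1 => pi _; rewrite /path_rew big_ord0 mulr0. Qed.

Lemma hit_rewS sg s n : hit_rew sg s n.+1 =
  if s \in T then 0 else
  \sum_(s' : S) P s (sg s) s' * (rew s * hit_prob P T sg s' n + hit_rew sg s' n).
Proof.
rewrite /hit_rew big_first_hitS; case: ifP => // _; apply: eq_bigr => s' _.
rewrite /hit_prob mulrDr !mulr_sumr -big_split /=; apply: eq_bigr => p fh.
by rewrite path_prob_cons path_rew_cons (first_hit_head fh); ring.
Qed.

End first_hit_decomposition.

Section miss_prob.
Variables (R : realType) (S A : finType) (P : S -> A -> S -> R).
Hypothesis P_ge0 : forall s a s', 0 <= P s a s'.

Definition stochastic (sg : S -> A) := forall u, \sum_(u' : S) P u (sg u) u' = 1.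

Fixpoint miss_prob (T : {set S}) (sg : S -> A) (n : nat) (u : S) : R :=
  if n is n'.+1 then
    if u \in T then 0 else \sum_(u' : S) P u (sg u) u' * miss_prob T sg n' u'
  else 1.

Definition reaches_as T sg u := forall e : R, 0 < e -> exists n, miss_prob T sg n u < e.

Definition succ_closed (T : {set S}) (sg : S -> A) (G : pred S) :=
  forall u u', G u -> u \notin T -> 0 < P u (sg u) u' -> G u'.

Lemma miss_prob_ge0 T sg n u : 0 <= miss_prob T sg n u.
Proof.
elim: n u => [|n IH] u /=; first exact: ler01.
by case: ifP => _ //; apply: sumr_ge0 => u' _; apply: mulr_ge0.
Qed.

Lemma miss_prob_le1 T sg : stochastic sg -> forall n u, miss_prob T sg n u <= 1.
Proof.
move=> sg_st; elim=> [|n IH] u //=; case: ifP => _ //.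
rewrite -(sg_st u); apply: ler_sum => u' _.
by rewrite -[leRHS]mulr1; apply: ler_wpM2l.
Qed.

Lemma miss_probS T sg n u : miss_prob T sg n.+1 u =
  if u \in T then 0 else \sum_(u' : S) P u (sg u) u' * miss_prob T sg n u'.
Proof. by []. Qed.

Lemma miss_probS_le T sg : stochastic sg -> forall n u,
  miss_prob T sg n.+1 u <= miss_prob T sg n u.
Proof.
move=> sg_st; elim=> [|n IH] u; first exact: miss_prob_le1.
rewrite miss_probS [leRHS]miss_probS; case: ifP => _ //.
by apply: ler_sum => u' _; apply: ler_wpM2l.
Qed.

Lemma miss_prob_nonincr T sg : stochastic sg ->
  forall m n, (m <= n)%N -> forall u, miss_prob T sg n u <= miss_prob T sg m u.
Proof.
move=> sg_st m n /subnK <- u; elim: (n - m)%N => [|k IH]; first by rewrite add0n.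
by apply: le_trans IH; apply: miss_probS_le.
Qed.

Lemma miss_prob_subset (T T' : {set S}) sg n u :
  T \subset T' -> miss_prob T' sg n u <= miss_prob T sg n u.
Proof.
move=> sub; elim: n u => [|n IH] u //=.
case: ifP => uT'.
  by case: ifP => _ //; apply: sumr_ge0 => v _; rewrite mulr_ge0 ?miss_prob_ge0.
rewrite (contraFF (fintype.subsetP sub u) uT').
by apply: ler_sum => v _; apply: ler_wpM2l.
Qed.

Lemma reaches_as_succ T sg u u' : stochastic sg ->
  reaches_as T sg u -> u \notin T -> 0 < P u (sg u) u' -> reaches_as T sg u'.
Proof.
move=> sg_st reach_u uT Pu e e_gt0.
have [n miss_n] := reach_u (e * P u (sg u) u') (mulr_gt0 e_gt0 Pu).
exists n.
have one_step : P u (sg u) u' * miss_prob T sg n u' <= miss_prob T sg n.+1 u.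
  rewrite /= (negbTE uT) (bigD1 u') //= -[leLHS]addr0 lerD2l.
  by apply: sumr_ge0 => v _; apply: mulr_ge0 => //; apply: miss_prob_ge0.
have := le_lt_trans (le_trans one_step (miss_probS_le T sg_st n u)) miss_n.
by rewrite mulrC ltr_pM2r.
Qed.

(* Within n steps a tau-path from u either avoids s, and then follows tau', or
   reaches s, from where it must miss T for m more steps. *)
Lemma miss_prob_switch_le T s tau tau' : stochastic tau ->
  (forall u, u != s -> tau' u = tau u) -> forall m n u,
  miss_prob T tau (n + m) u <= miss_prob (s |: T) tau' n u + miss_prob T tau m s.
Proof.
move=> tau_st tau'E m; elim=> [|n IH] u.
  apply: le_trans (miss_prob_le1 T tau_st _ _) _.
  by rewrite lerDl; apply: miss_prob_ge0.
have [-> | us] := eqVneq u s.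
  apply: le_trans (miss_prob_nonincr T tau_st (leq_addl n.+1 m) s) _.
  by rewrite lerDr; apply: miss_prob_ge0.
rewrite addSn !miss_probS in_setU1 (negbTE us) /=.
case: ifP => uT; first by rewrite add0r; apply: miss_prob_ge0.
rewrite (tau'E u us) -[X in _ <= _ + X]mul1r -(tau_st u) mulr_suml -big_split /=.
by apply: ler_sum => v _; rewrite -mulrDr; apply: ler_wpM2l.
Qed.

Lemma reaches_as_switch T s tau tau' u : stochastic tau ->
  (forall u, u != s -> tau' u = tau u) ->
  reaches_as T tau s -> reaches_as T tau' u -> reaches_as T tau u.
Proof.
move=> tau_st tau'E reach_s reach_u e e_gt0.
have e2_gt0 : 0 < e / 2 by rewrite divr_gt0.
have [n miss_n] := reach_u _ e2_gt0; have [m miss_m] := reach_s _ e2_gt0.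
exists (n + m)%N; apply: le_lt_trans (miss_prob_switch_le T tau_st tau'E m n u) _.
have := miss_prob_subset tau' n u (finset.subsetUr [set s] T).
lra.
Qed.

Lemma exists_unif_miss_prob_le T sg (G : pred S) (c : R) : stochastic sg -> 0 < c ->
  (forall u, G u -> reaches_as T sg u) -> exists N, forall u, G u -> miss_prob T sg N u <= c.
Proof.
move=> sg_st c_gt0 reach.
suff [N miss_N] : exists N, forall u, u \in enum S -> G u -> miss_prob T sg N u <= c.
  by exists N => u; apply: miss_N; rewrite mem_enum.
elim: (enum S) => [|a l [N miss_N]]; first by exists 0%N.
have [Ga|nGa] := boolP (G a); last first.
  by exists N => u; rewrite inE => /predU1P[->|]; [rewrite (negbTE nGa)|exact: miss_N].
have [n miss_n] := reach a Ga c c_gt0.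
exists (maxn N n) => u; rewrite inE => /predU1P[-> _|ul Gu].
  by apply: le_trans (ltW miss_n); apply: miss_prob_nonincr; rewrite // leq_maxr.
by apply: le_trans (miss_N u ul Gu); apply: miss_prob_nonincr; rewrite // leq_maxl.
Qed.

Lemma miss_prob_addn_le T sg (G : pred S) (c : R) m : succ_closed T sg G ->
  (forall u, G u -> miss_prob T sg m u <= c) ->
  forall n u, G u -> miss_prob T sg (n + m) u <= c * miss_prob T sg n u.
Proof.
move=> closed miss_m; elim=> [|n IH] u Gu; first by rewrite add0n mulr1; apply: miss_m.
rewrite addSn /=; case: ifPn => uT; first by rewrite mulr0.
rewrite mulr_sumr; apply: ler_sum => v _; rewrite mulrCA.
have [->|Puv] := eqVneq (P u (sg u) v) 0; first by rewrite !mul0r.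
have Puv_gt0 : 0 < P u (sg u) v by rewrite lt0r Puv P_ge0.
by apply: ler_wpM2l => //; apply: IH; apply: closed Puv_gt0.
Qed.

Lemma miss_prob_geometric T sg (G : pred S) N (c : R) : 0 <= c -> succ_closed T sg G ->
  (forall u, G u -> miss_prob T sg N u <= c) ->
  forall k u, G u -> miss_prob T sg (k * N) u <= c ^+ k.
Proof.
move=> c_ge0 closed miss_N; elim=> [|k IH] u Gu; first by rewrite mul0n expr0.
rewrite mulSn addnC exprS; apply: le_trans (miss_prob_addn_le closed miss_N _ Gu) _.
exact: ler_wpM2l (IH u Gu).
Qed.

Lemma exists_weighted_miss_prob_le T sg (G : pred S) (B Rm e : R) :
  stochastic sg -> succ_closed T sg G ->
  (forall u, G u -> reaches_as T sg u) -> 0 <= B -> 0 <= Rm -> 0 < e ->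
  exists n, forall u, G u -> (B + n%:R * Rm) * miss_prob T sg n u <= e.
Proof.
move=> sg_st closed reach B_ge0 Rm_ge0 e_gt0.
(* With miss_prob N <= 1/4 on G, the weight B + k N Rm <= (k + 1) (B + N Rm)
   at time k N is beaten by miss_prob (k N) <= 4^-k. *)
have quarter_gt0 : 0 < 4^-1 :> R by rewrite invr_gt0.
have [N miss_N] := exists_unif_miss_prob_le sg_st quarter_gt0 reach.
have D_ge0 : 0 <= B + N%:R * Rm by rewrite addr_ge0 ?mulr_ge0.
have [k small_k] := exists_succn_mul_quarter_exp_le D_ge0 e_gt0.
exists (k * N)%N => u Gu; apply: le_trans small_k.
have q_ge0 : 0 <= 4^-1 ^+ k :> R by rewrite exprn_ge0 // ltW.
have NRm_ge0 : 0 <= N%:R * Rm by rewrite mulr_ge0.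
have W_ge0 : 0 <= B + (k * N)%:R * Rm by rewrite addr_ge0 ?mulr_ge0.
have miss_kN := miss_prob_geometric (ltW quarter_gt0) closed miss_N k Gu.
apply: le_trans (ler_wpM2l W_ge0 miss_kN) _.
apply: ler_wpM2r => //; rewrite natrM -addn1 natrD.
have : 0 <= B * k%:R by rewrite mulr_ge0.
nra.
Qed.

End miss_prob.

Section reachability.
Variables (R : realType) (S A : finType) (P : S -> A -> S -> R) (T : {set S}).
Hypothesis P_ge0 : forall s a s', 0 <= P s a s'.

Definition hit_upto sg n s := \sum_(0 <= k < n) hit_prob P T sg s k.

Lemma hit_uptoS sg n s : hit_upto sg n.+1 s =
  (s \in T)%:R + if s \in T then 0 else \sum_(s' : S) P s (sg s) s' * hit_upto sg n s'.
Proof.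
rewrite /hit_upto big_nat_recl // hit_prob0; congr (_ + _).
under eq_bigr do rewrite hit_probS.
case: ifP => _; first by rewrite big1.
by rewrite exchange_big /=; apply: eq_bigr => s' _; rewrite mulr_sumr.
Qed.

Lemma miss_probE sg : stochastic P sg -> forall n s, miss_prob P T sg n s = 1 - hit_upto sg n s.
Proof.
move=> sg_st; elim=> [|n IH] s; first by rewrite /hit_upto big_geq // subr0.
rewrite miss_probS hit_uptoS; case: ifP => _; first by rewrite addr0 subrr.
under eq_bigr do rewrite IH mulrBr mulr1.
by rewrite add0r sumrB sg_st.
Qed.

Lemma path_prob_ge0 sg n (pi : {ffun 'I_n.+1 -> S}) : 0 <= path_prob P sg pi.
Proof. exact: prodr_ge0. Qed.

Lemma hit_prob_ge0 sg s n : 0 <= hit_prob P T sg s n.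
Proof. by apply: sumr_ge0 => pi _; apply: path_prob_ge0. Qed.

Lemma PrReach_le1 sg : stochastic P sg -> forall s, (PrReach P T sg s <= 1)%E.
Proof.
move=> sg_st s; apply: nneseries_le_ub => [n|n]; first exact: hit_prob_ge0.
have := miss_prob_ge0 P_ge0 T sg n s.
by rewrite sumEFin lee_fin miss_probE // -/(hit_upto sg n s); lra.
Qed.

Lemma PrReach_eq1P sg : stochastic P sg -> forall s,
  PrReach P T sg s = 1%E <-> reaches_as P T sg s.
Proof.
move=> sg_st s; split => [reach1 e e_gt0 | reach].
  apply: contrapT => /forallNP miss_ge.
  suff : (PrReach P T sg s <= (1 - e)%:E)%E by rewrite reach1 lee_fin; lra.
  apply: nneseries_le_ub => [n|n]; first exact: hit_prob_ge0.
  have /negP := miss_ge n; rewrite -leNgt sumEFin lee_fin miss_probE //.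
  by rewrite -/(hit_upto sg n s); lra.
apply/eqP; rewrite eq_le PrReach_le1 //=; apply/lee_addgt0Pr => e e_gt0.
have [n] := reach e e_gt0; rewrite miss_probE // => hit_n.
apply: le_trans (leeD2r _ (psum_le_nneseries n (hit_prob_ge0 sg s))).
by rewrite -EFinD lee_fin -/(hit_upto sg n s); lra.
Qed.

Variable rew : S -> R.
Hypothesis rew_ge0 : forall s, 0 <= rew s.

Definition rew_upto sg n s := \sum_(0 <= k < n) hit_rew P T rew sg s k.

Lemma hit_rew_ge0 sg s n : 0 <= hit_rew P T rew sg s n.
Proof.
apply: sumr_ge0 => pi _; apply: mulr_ge0; first exact: path_prob_ge0.
exact: sumr_ge0.
Qed.

Lemma rew_uptoS sg n s : rew_upto sg n.+1 s =
  if s \in T then 0 else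
  \sum_(s' : S) P s (sg s) s' * (rew s * hit_upto sg n s' + rew_upto sg n s').
Proof.
rewrite /rew_upto big_nat_recl // hit_rew0 add0r.
under eq_bigr do rewrite hit_rewS.
case: ifP => _; first by rewrite big1.
rewrite exchange_big /=; apply: eq_bigr => s' _.
by rewrite -mulr_sumr big_split /= -mulr_sumr.
Qed.

Lemma ExpRew_infty sg s : stochastic P sg ->
  ~ reaches_as P T sg s -> ExpRew P T rew sg s = +oo%E.
Proof.
move=> sg_st /(PrReach_eq1P sg_st)/eqP/negbTE not_reach.
rewrite /ExpRew not_reach addey // gt_eqF //.
apply: lt_le_trans ltNy0 _; apply: nneseries_ge0 => n _ _.
by rewrite lee_fin; apply: hit_rew_ge0.
Qed.

Section subsolution.
Variables (sg : S -> A) (G : pred S) (y : S -> R).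
Hypotheses (sg_st : stochastic P sg) (G_closed : succ_closed P T sg G).
Hypothesis y_le0 : forall u, G u -> u \in T -> y u <= 0.
Hypothesis y_sub : forall u, G u -> u \notin T ->
  y u <= rew u + \sum_(u' : S) P u (sg u) u' * y u'.

(* A path that has not hit T within n steps contributes at most B + n Rm: its
   bound on y plus the rewards collected so far. *)
Lemma subsolution_le_rew_upto (B Rm : R) :
  (forall u, G u -> y u <= B) -> (forall u, rew u <= Rm) ->
  forall n u, G u -> y u <= rew_upto sg n u + (B + n%:R * Rm) * miss_prob P T sg n u.
Proof.
move=> y_leB rew_leRm; elim=> [|n IH] u Gu.
  by rewrite /rew_upto big_geq // add0r mul0r addr0 mulr1; apply: y_leB.
rewrite rew_uptoS miss_probS; case: ifPn => uT; first by rewrite mulr0 addr0; apply: y_le0.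
apply: le_trans (y_sub Gu uT) _.
set C := B + n%:R * Rm; set a := \sum_(v : S) P u (sg u) v * miss_prob P T sg n v.
have IH_step : \sum_(v : S) P u (sg u) v * y v <=
    \sum_(v : S) P u (sg u) v * rew_upto sg n v + C * a.
  rewrite /a mulr_sumr -big_split /=; apply: ler_sum => v _; rewrite mulrCA -mulrDr.
  have [->|Puv] := eqVneq (P u (sg u) v) 0; first by rewrite !mul0r.
  have Puv_gt0 : 0 < P u (sg u) v by rewrite lt0r Puv P_ge0.
  by apply: ler_wpM2l => //; apply: IH; apply: G_closed Puv_gt0.
have rew_part : \sum_(v : S) P u (sg u) v * (rew u * hit_upto sg n v + rew_upto sg n v) =
    rew u - rew u * a + \sum_(v : S) P u (sg u) v * rew_upto sg n v.
  transitivity (\sum_(v : S) (rew u * P u (sg u) v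
      - rew u * (P u (sg u) v * miss_prob P T sg n v) + P u (sg u) v * rew_upto sg n v)).
    by apply: eq_bigr => v _; rewrite (miss_probE sg_st); ring.
  by rewrite big_split sumrB /= -!mulr_sumr sg_st mulr1.
have a_ge0 : 0 <= a by apply: sumr_ge0 => v _; rewrite mulr_ge0 ?miss_prob_ge0.
have : rew u * a <= Rm * a by apply: ler_wpM2r.
rewrite rew_part (_ : B + _ * Rm = C + Rm); last by rewrite /C -addn1 natrD; ring.
lra.
Qed.

Hypothesis G_reach : forall u, G u -> reaches_as P T sg u.

Lemma subsolution_le_rew_upto_eps u e : G u -> 0 < e ->
  exists n, y u <= rew_upto sg n u + e.
Proof.
move=> Gu e_gt0.
pose B := \sum_(v : S) `|y v|; pose Rm := \sum_(v : S) rew v.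
have le_sum (f : S -> R) v : (forall w, 0 <= f w) -> f v <= \sum_w f w.
  by move=> f_ge0; rewrite (bigD1 v) //= lerDl sumr_ge0.
have [||n small_n] := exists_weighted_miss_prob_le (B := B) (Rm := Rm)
  P_ge0 sg_st G_closed G_reach _ _ e_gt0; [exact: sumr_ge0 | exact: sumr_ge0 |].
exists n; apply: le_trans (subsolution_le_rew_upto (B := B) (Rm := Rm) _ _ n Gu) _.
- by move=> v _; apply: le_trans (ler_norm _) (le_sum _ _ _).
- by move=> v; apply: le_sum.
by rewrite lerD2l small_n.
Qed.

End subsolution.

End reachability.

Section optimal_strategies.
Variables (R : realType) (S A : finType) (P : S -> A -> S -> R) (T : {set S}).
Variable rew : S -> R.
Hypotheses (P_ge0 : forall s a s', 0 <= P s a s') (rew_ge0 : forall s, 0 <= rew s).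
Hypothesis Act_neq0 : forall s, exists a, a \in Act P s.
Variable x : S -> \bar R.
Hypothesis x_ge0 : forall s, (0 <= x s)%E.

Lemma strategy_stochastic sg : strategy P sg -> stochastic P sg.
Proof. by move=> sg_strat u; have := sg_strat u; rewrite inE => /eqP. Qed.

Lemma succ_sumEFin u a : (forall u', 0 < P u a u' -> x u' \is a fin_num) ->
  (\sum_(u' | (0 < P u a u')%R) (P u a u')%:E * x u')%E =
  (\sum_(u' : S) P u a u' * fine (x u'))%:E.
Proof.
move=> x_fin; rewrite -sumEFin [in RHS](bigID (fun u' => 0 < P u a u')) /=.
rewrite [X in (_ + X)%E]big1 ?adde0 => [|v /negbTE Puv]; last first.
  by rewrite (_ : P u a v = 0) ?mul0r //; apply/eqP; rewrite eq_le P_ge0 andbT leNgt Puv.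
by apply: eq_bigr => v Puv; rewrite EFinM fineK // x_fin.
Qed.

Lemma subsolution_le_ExpRew sg (G : pred S) : stochastic P sg -> succ_closed P T sg G ->
  (forall u, G u -> reaches_as P T sg u) -> (forall u, G u -> x u \is a fin_num) ->
  (forall u, G u -> u \in T -> (x u <= 0)%E) ->
  (forall u, G u -> u \notin T -> (x u <= (rew u)%:E +
      \sum_(u' | (0 < P u (sg u) u')%R) (P u (sg u) u')%:E * x u')%E) ->
  forall u, G u -> (x u <= ExpRew P T rew sg u)%E.
Proof.
move=> sg_st G_closed G_reach x_fin x_le0 x_sub u Gu.
have y_le0 v : G v -> v \in T -> fine (x v) <= 0.
  by move=> Gv vT; rewrite -lee_fin fineK ?x_fin // x_le0.
have y_sub v : G v -> v \notin T ->
    fine (x v) <= rew v + \sum_(v' : S) P v (sg v) v' * fine (x v').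
  move=> Gv vT; rewrite -lee_fin fineK ?x_fin // EFinD -succ_sumEFin ?x_sub // => w Pvw.
  by apply: x_fin; apply: G_closed Pvw.
have /(PrReach_eq1P T P_ge0 sg_st) reach1 := G_reach u Gu.
rewrite /ExpRew reach1 eqxx adde0 -(fineK (x_fin u Gu)); apply/lee_addgt0Pr => e e_gt0.
have [n le_n] := subsolution_le_rew_upto_eps P_ge0 rew_ge0 sg_st G_closed
  y_le0 y_sub G_reach Gu e_gt0.
apply: le_trans (leeD2r _ (psum_le_nneseries n (hit_rew_ge0 T P_ge0 rew_ge0 sg u))).
by rewrite -EFinD lee_fin.
Qed.

Lemma PrOpt_max_eq1 sg u : strategy P sg -> reaches_as P T sg u -> PrOpt P T OMax u = 1%E.
Proof.
move=> sg_strat reach; apply/eqP; rewrite eq_le; apply/andP; split.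
  apply: ge_ereal_sup => _ [tau tau_strat <-].
  exact: (PrReach_le1 T P_ge0 (strategy_stochastic tau_strat)).
apply: le_ereal_sup_tmp; exists (PrReach P T sg u); first by exists sg.
by have /(PrReach_eq1P T P_ge0 (strategy_stochastic sg_strat)) -> := reach.
Qed.

Lemma exists_strategy : exists sg, strategy P sg.
Proof. by exists (fun u => xchoose (Act_neq0 u)) => u; apply: xchooseP. Qed.

Lemma PrOpt_min_eq1 u : (forall tau, strategy P tau -> reaches_as P T tau u) ->
  PrOpt P T OMin u = 1%E.
Proof.
move=> reach; have [sg sg_strat] := exists_strategy.
apply/eqP; rewrite eq_le; apply/andP; split.
  apply: ereal_inf_lbound; exists sg => //.
  by apply/(PrReach_eq1P T P_ge0 (strategy_stochastic sg_strat)); apply: reach.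
apply: le_ereal_inf_tmp => _ [tau tau_strat <-].
by have /(PrReach_eq1P T P_ge0 (strategy_stochastic tau_strat)) -> := reach _ tau_strat.
Qed.

Lemma exists_greedy_strategy (f : S -> A -> \bar R) :
  exists2 sg, strategy P sg & forall u a, a \in Act P u -> (f u a <= f u (sg u))%E.
Proof.
pose a0 u := xchoose (Act_neq0 u).
exists (fun u => [arg max_(a > a0 u in Act P u) f u a]%O) => u.
  by case: arg_maxP => //; apply: xchooseP.
by move=> a Ha; case: arg_maxP => [|b _ /(_ a Ha)//]; apply: xchooseP.
Qed.

Lemma all_reaches_as_succ sg u u' : strategy P sg ->
  (forall tau, strategy P tau -> reaches_as P T tau u) -> u \notin T ->
  0 < P u (sg u) u' -> forall tau, strategy P tau -> reaches_as P T tau u'.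
Proof.
move=> sg_strat reach uT Puu' tau tau_strat.
pose tau' v := if v == u then sg u else tau v.
have tau'_strat : strategy P tau'.
  by move=> v; rewrite /tau'; case: eqP => [->|_]; [apply: sg_strat | apply: tau_strat].
have tau'E v : v != u -> tau' v = tau v by rewrite /tau' => /negbTE ->.
have tau'_st := strategy_stochastic tau'_strat.
have Puu'_tau' : 0 < P u (tau' u) u' by rewrite /tau' eqxx.
apply: (reaches_as_switch P_ge0 (strategy_stochastic tau_strat) tau'E); first exact: reach.
exact: (reaches_as_succ P_ge0 tau'_st (reach _ tau'_strat) uT Puu'_tau').
Qed.

Lemma le_ExpOpt_min : (forall s, (x s <= Bellman P T rew OMin x s)%E) ->
  (forall s, PrOpt P T OMax s = 1%E -> (x s < +oo)%E) ->
  forall s, (x s <= ExpOpt P T rew OMin s)%E.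
Proof.
move=> x_le_Bellman x_fin s; apply: le_ereal_inf_tmp => _ [sg sg_strat <-].
have sg_st := strategy_stochastic sg_strat.
have [reach_s|not_reach] := pselect (reaches_as P T sg s); last first.
  by rewrite ExpRew_infty ?leey.
apply: (subsolution_le_ExpRew (G := fun u => `[< reaches_as P T sg u >])) => //.
- move=> v v' /asboolP reach_v vT Pvv'; apply/asboolP.
  exact: (reaches_as_succ P_ge0 sg_st reach_v vT Pvv').
- by move=> v /asboolP.
- move=> v /asboolP reach_v; rewrite ge0_fin_numE // x_fin //.
  exact: PrOpt_max_eq1 sg_strat reach_v.
- by move=> v _ vT; have := x_le_Bellman v; rewrite /Bellman vT.
- move=> v _ vT; apply: le_trans (x_le_Bellman v) _; rewrite /Bellman (negbTE vT) leeD2l //=.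
  by apply: ereal_inf_lbound; exists (sg v) => //; apply: sg_strat.
- exact/asboolP.
Qed.

Lemma le_ExpOpt_max : (forall s, (x s <= Bellman P T rew OMax x s)%E) ->
  (forall s, PrOpt P T OMin s = 1%E -> (x s < +oo)%E) ->
  forall s, (x s <= ExpOpt P T rew OMax s)%E.
Proof.
move=> x_le_Bellman x_fin s.
have [all_reach|] := pselect (forall tau, strategy P tau -> reaches_as P T tau s); last first.
  move=> /existsNP[tau /not_implyP[tau_strat not_reach]].
  apply: le_ereal_sup_tmp; exists (ExpRew P T rew tau s); first by exists tau.
  by rewrite ExpRew_infty ?leey //; apply: strategy_stochastic.
pose f u a := (\sum_(u' | (0 < P u a u')%R) (P u a u')%:E * x u')%E.
have [sg sg_strat sg_greedy] := exists_greedy_strategy f.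
apply: le_ereal_sup_tmp; exists (ExpRew P T rew sg s); first by exists sg.
pose G u := `[< forall tau, strategy P tau -> reaches_as P T tau u >].
apply: (subsolution_le_ExpRew (G := G)) => //.
- exact: strategy_stochastic.
- move=> v v' /asboolP reach_v vT Pvv'; apply/asboolP.
  exact: all_reaches_as_succ sg_strat reach_v vT Pvv'.
- by move=> v /asboolP; apply.
- by move=> v /asboolP reach_v; rewrite ge0_fin_numE // x_fin // PrOpt_min_eq1.
- by move=> v _ vT; have := x_le_Bellman v; rewrite /Bellman vT.
- move=> v _ vT; apply: le_trans (x_le_Bellman v) _; rewrite /Bellman (negbTE vT) leeD2l //=.
  by apply: ge_ereal_sup => _ [a Ha <-]; apply: sg_greedy.
- exact/asboolP.
Qed.

End optimal_strategies.

Theorem lemma6 (R : realType) (S A : finType) (P : S -> A -> S -> R)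
  (T : {set S}) (rew : S -> R) (o : optT) (x : S -> \bar R) :
  is_MDP P ->
  (forall s, 0 <= rew s) ->
  (forall s, (0 <= x s)%E) ->
  (forall s, (x s <= Bellman P T rew o x s)%E) ->
  (forall s, PrOpt P T (dual_opt o) s = 1%E -> (x s < +oo)%E) ->
  forall s, (x s <= ExpOpt P T rew o s)%E.
Proof.
move=> [P_bounds [_ Act_neq0]] rew_ge0 x_ge0.
have P_ge0 s a s' : 0 <= P s a s' by case/andP: (P_bounds s a s').
by case: o => x_le_Bellman x_fin;
  [apply: le_ExpOpt_min | apply: le_ExpOpt_max].
Qed.
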